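(* Let $D\in\{0,1\}$, and let $M(0),M(1)\in\{0,1\}$ and $Y(d,m)\in\{0,1\}$ for $d,m\in\{0,1\}$ be random variables such that $D$, $\{M(0),M(1)\}$ and $\{Y(0,0),Y(0,1),Y(1,0),Y(1,1)\}$ are mutually independent, and such that $Y(0,0)=Y(1,0)=0$ almost surely. Define $M=M(D)$, $Y(d)=Y(d,M(d))$ and $Y=Y(D)$. Let $\beta_M=\mathbb{E}[M(1)-M(0)]$, $\beta_Y=\mathbb{E}[Y(1,1)-Y(0,1)]$, and define the principal stratum $S$ by $S=\mathrm{al}$ if $M(0)=M(1)=1$, $S=\mathrm{mi}$ if $M(0)=0,M(1)=1$, $S=\mathrm{ma}$ if $M(0)=1,M(1)=0$, $S=\mathrm{ne}$ if $M(0)=M(1)=0$. Let $$\boldsymbol\theta=\begin{pmatrix}\mathbb{E}[Y(1)-Y(0)\mid S=\mathrm{al}]\\ \mathbb{E}[Y(1)-Y(0)\mid S=\mathrm{mi}]\\ \mathbb{E}[Y(1)-Y(0)\mid S=\mathrm{ma}]\\ \mathbb{E}[Y(1)-Y(0)\mid S=\mathrm{ne}]\end{pmatrix}=\begin{pmatrix}\beta_Y\\ \beta_Y+\mathbb{E}[Y(0,1)]\\ -\mathbb{E}[Y(0,1)]\\ 0\end{pmatrix}$$ (where the conditional expectations are defined). Then, whenever the relevant conditioning events have positive probability, each of the estimands $\mathrm{ATE}_{M=1}=\mathbb{E}[Y(1)-Y(0)\mid M=1]$, $\mathrm{ATT}_{M=1}=\mathbb{E}[Y(1)-Y(0)\mid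 D=1,M=1]$, $\mathrm{ATE}=\mathbb{E}[Y(1)-Y(0)]$ and $\mathrm{ATT}=\mathbb{E}[Y(1)-Y(0)\mid D=1]$ equals $(\mathbf{w}^T\boldsymbol\theta)/(\mathbf{w}^T\mathbf{1})$, where $\mathbf 1$ is the all-ones vector and the weight vector $\mathbf w$ is, respectively, $$\mathbf{w}(\mathrm{ATE}_{M=1})=\begin{pmatrix}P(S=\mathrm{al})\\ [P(S=\mathrm{ma})+\beta_M]\,P(D=1)\\ P(S=\mathrm{ma})\,P(D=0)\\ 0\end{pmatrix},\quad \mathbf{w}(\mathrm{ATT}_{M=1})=\begin{pmatrix}P(S=\mathrm{al})\\ P(S=\mathrm{ma})+\beta_M\\ 0\\ 0\end{pmatrix},$$ $$\mathbf{w}(\mathrm{ATE})=\mathbf{w}(\mathrm{ATT})=\begin{pmatrix}P(S=\mathrm{al})\\ P(S=\mathrm{mi})\\ P(S=\mathrm{ma})\\ P(S=\mathrm{ne})\end{pmatrix}=\begin{pmatrix}P(S=\mathrm{al})\\ P(S=\mathrm{ma})+\beta_M\\ P(S=\mathrm{ma})\\ P(S=\mathrm{ne})\end{pmatrix}.$$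
   Context: Setting: each unit is a police–civilian encounter. $D$ is the civilian's race ($D=1$ minority), $M(d)$ the potential indicator of detainment/stop under race $d$, $Y(d,m)$ the potential indicator of police use of force under race $d$ and detainment status $m$. The variables arise from a nonparametric structural equation model with independent errors $D=f_D(\epsilon_D)$, $M=f_M(D,\epsilon_M)$, $Y=f_Y(D,M,\epsilon_Y)$ with $M(d)=f_M(d,\epsilon_M)$, $Y(d,m)=f_Y(d,m,\epsilon_Y)$, which yields the stated mutual independence. The condition $Y(0,0)=Y(1,0)=0$ (''mandatory reporting'', part (i)) says there is no use of force without a stop. No monotonicity $M(1)\ge M(0)$ is assumed. *)

From mathcomp Require Import all_boot all_order all_algebra.
From mathcomp Require Import all_classical all_reals all_analysis.
Set Implicit Arguments. Unset Strict Implicit. Unset Printing Implicit Defensive.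
Import Order.TTheory GRing.Theory Num.Theory.
Local Open Scope classical_set_scope.
Local Open Scope ring_scope.

Section Defs.
Context (d : measure_display) (T : measurableType d) (R : realType)
  (P : probability T R).

Definition Pr (A : set T) : R := fine (P A).

(* a {0,1}-valued random variable, represented as a bool-valued function *)
Definition rv_bool (X : T -> bool) : Prop := measurable [set t | X t].


Definition Ex (Z : T -> R) : R := fine (\int[P]_x (Z x)%:E).

Definition CondEx (Z : T -> R) (A : set T) : R :=
  fine (\int[P]_(x in A) (Z x)%:E) / Pr A.

(* mutual independence of the random elements D, (M0,M1), (Y00,Y01,Y10,Y11)
   with finite codomains (all subsets measurable) *)
Definition indep3 (D : T -> bool) (MM : T -> bool * bool)
  (YY : T -> bool * bool * bool * bool) : Prop :=
  forall (A : set bool) (B : set (bool * bool))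
         (C : set (bool * bool * bool * bool)),
    Pr ([set t | A (D t)] `&` [set t | B (MM t)] `&` [set t | C (YY t)])
    = Pr [set t | A (D t)] * Pr [set t | B (MM t)] * Pr [set t | C (YY t)].
End Defs.

Definition ind {R : realType} {T : Type} (X : T -> bool) : T -> R :=
  fun t => (X t)%:R.

Definition wratio (R : realType) (w1 w2 w3 w4 t1 t2 t3 t4 : R) : R :=
  (w1 * t1 + w2 * t2 + w3 * t3 + w4 * t4) / (w1 + w2 + w3 + w4).

From mathcomp Require Import all_boot all_order all_algebra.
From mathcomp Require Import all_classical all_reals all_analysis.
From mathcomp Require Import ring.
Import Order.TTheory GRing.Theory Num.Theory.
Local Open Scope classical_set_scope.
Local Open Scope ring_scope.
Set Implicit Arguments. Unset Strict Implicit. Unset Printing Implicit Defensive.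

(* Every quantity in the proposition is the expectation, on some event, of a
   function of the joint random element V = (D, (M0,M1), (Y00,Y01,Y10,Y11)),
   which takes finitely many values.  Such an integral is a finite sum over the
   law of V (Section FiniteRandomVariable).  Mutual independence makes this law
   a product  P(D=a) P((M0,M1)=b) P(Y..=c), and mandatory reporting kills every
   c with Y00 or Y10 true; so each quantity becomes an explicit polynomial in
   P(D=1), the four stratum probabilities and the law of (Y01,Y11), subject to
   the normalisations "probabilities sum to one" (Section MediationModel).
   Each estimand is then identified by comparing two such polynomials with
   [ring]: its numerator  E[tau 1_A]  and its denominator  P(A)  equal
   k (w.theta) and k (w.1) for an explicit scalar k, and the general lemma
   [CondEx_ratio] turns this into  CondEx tau A = (w.theta)/(w.1). *)

Lemma sum_pair (R : nmodType) (I J : finType) (F : I * J -> R) :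
  \sum_(p : I * J) F p = \sum_(i : I) \sum_(j : J) F (i, j).
Proof. by rewrite pair_bigA; apply: eq_bigr => -[]. Qed.

Section FiniteRandomVariable.
Context (d : measure_display) (T : measurableType d) (R : realType)
  (P : probability T R) (U : finType) (V : T -> U).
Hypothesis measurable_fiber : forall u, measurable [set t | V t = u].

(* Every preimage is a finite union of fibers, hence an event. *)
Lemma measurable_preimage (B : set U) : measurable (V @^-1` B).
Proof.
have -> : V @^-1` B = \bigcup_(u in B) [set t | V t = u].
  by apply/seteqP; split => [t Bt | t [u Bu /= ->]] //; exists (V t).
by apply: fin_bigcup_measurable => //; exact: finite_finset.
Qed.

Lemma integral_finite_rv (A : set T) (g : U -> R) : measurable A ->
  (\int[P]_(x in A) (g (V x))%:E)%E
  = (\sum_u g u * Pr P (A `&` [set t | V t = u]))%:E.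
Proof.
move=> mA.
have AE : A = \big[setU/set0]_(u <- index_enum U) (A `&` [set t | V t = u]).
  rewrite -bigcup_seq; apply/seteqP; split => [t At | t [u _ [At _]]] //.
  by exists (V t) => //=; rewrite mem_index_enum.
rewrite {1}AE integral_bigsetU_EFin //.
- rewrite -sumEFin; apply: eq_bigr => u _.
  rewrite (eq_integral (fun _ => (g u)%:E)); last by move=> t /set_mem [_ ->].
  rewrite integral_cst; last exact: measurableI.
  by rewrite EFinM /Pr fineK // fin_num_measure //; exact: measurableI.
- by move=> u; apply: measurableI.
- exact: index_enum_uniq.
- by move=> u v _ _ [t [[_ /= <-] [_ /= <-]]].
- move=> mD Y mY; apply: measurableI => //.
  exact: (measurable_preimage [set u | Y (g u)%:E]).
Qed.

Lemma event_integral (a : pred U) (g : U -> R) :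
  fine (\int[P]_(x in [set t | a (V t)]) (g (V x))%:E)%E
  = \sum_u g u * (a u)%:R * Pr P [set t | V t = u].
Proof.
rewrite integral_finite_rv /=; last exact: (measurable_preimage [set u | a u]).
apply: eq_bigr => u _; rewrite -mulrA; congr (_ * _).
case au: (a u); rewrite ?(mul1r, mul0r).
  by congr (Pr P _); apply/seteqP; split => t /= => [[] | ->].
rewrite (_ : _ `&` _ = set0) /Pr ?measure0 //.
by apply/seteqP; split => t //= [+ Vtu]; rewrite Vtu au.
Qed.

Lemma expectation_finite_rv (g : U -> R) :
  fine (\int[P]_x (g (V x))%:E)%E = \sum_u g u * Pr P [set t | V t = u].
Proof.
rewrite (_ : setT = [set t | predT (V t)]); last by apply/seteqP.
by rewrite event_integral; apply: eq_bigr => u _; rewrite mulr1.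
Qed.

Lemma Pr_event (a : pred U) :
  Pr P [set t | a (V t)] = \sum_u (a u)%:R * Pr P [set t | V t = u].
Proof.
have := event_integral a (fun=> 1).
rewrite (eq_integral (cst 1%E)) // integral_cst; last first.
  exact: (measurable_preimage [set u | a u]).
by rewrite mul1e /Pr => ->; apply: eq_bigr => u _; rewrite mul1r mulrC.
Qed.

Lemma law_sum1 : \sum_u Pr P [set t | V t = u] = 1.
Proof.
transitivity (Pr P [set t | predT (V t)]).
  by rewrite Pr_event; apply: eq_bigr => u _; rewrite mul1r.
rewrite (_ : [set t | _] = setT); last by apply/seteqP.
by rewrite /Pr probability_setT.
Qed.

End FiniteRandomVariable.

Lemma measurable_bool_fiber d (T : measurableType d) (X : T -> bool) :
  rv_bool X -> forall b, measurable [set t | X t = b].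
Proof.
move=> mX [] //; rewrite (_ : [set t | X t = false] = ~` [set t | X t]).
  exact: measurableC.
by apply/seteqP; split => t /=; case: (X t).
Qed.

Lemma measurable_pair_fiber d (T : measurableType d) (U1 U2 : Type)
    (X1 : T -> U1) (X2 : T -> U2) :
  (forall u1, measurable [set t | X1 t = u1]) ->
  (forall u2, measurable [set t | X2 t = u2]) ->
  forall u, measurable [set t | (X1 t, X2 t) = u].
Proof.
move=> mX1 mX2 [u1 u2].
rewrite (_ : [set t | _] = [set t | X1 t = u1] `&` [set t | X2 t = u2]).
  exact: measurableI.
by apply/seteqP; split => t /= => [[-> ->] | [-> ->]].
Qed.

Lemma CondEx_ratio d (T : measurableType d) (R : realType)
    (P : probability T R) (Z : T -> R) (A : set T) (k x y : R) :
  fine (\int[P]_(t in A) (Z t)%:E)%E = k * x -> Pr P A = k * y -> k != 0 ->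
  CondEx P Z A = x / y.
Proof.
by move=> hZ hA k0; rewrite /CondEx hZ hA invfM mulrACA divff // mul1r.
Qed.

Lemma CondEx_of_integral d (T : measurableType d) (R : realType)
    (P : probability T R) (Z : T -> R) (A : set T) (c : R) :
  fine (\int[P]_(t in A) (Z t)%:E)%E = Pr P A * c -> 0 < Pr P A ->
  CondEx P Z A = c.
Proof.
move=> hZ pos; rewrite -[c]divr1.
by apply: CondEx_ratio hZ _ (lt0r_neq0 pos); rewrite mulr1.
Qed.

Section MediationModel.
Context (d : measure_display) (T : measurableType d) (R : realType)
  (P : probability T R) (D M0 M1 Y00 Y01 Y10 Y11 : T -> bool).
Hypotheses (mD : rv_bool D) (mM0 : rv_bool M0) (mM1 : rv_bool M1).
Hypotheses (mY00 : rv_bool Y00) (mY01 : rv_bool Y01).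
Hypotheses (mY10 : rv_bool Y10) (mY11 : rv_bool Y11).
Hypothesis independence :
  indep3 P D (fun t => (M0 t, M1 t)) (fun t => (Y00 t, Y01 t, Y10 t, Y11 t)).
Hypothesis mandatory_reporting : Pr P [set t | Y00 t || Y10 t] = 0.

Definition MM t := (M0 t, M1 t).
Definition YY t := (Y00 t, Y01 t, Y10 t, Y11 t).
Definition V t := (D t, MM t, YY t).
Local Notation joint := (bool * (bool * bool) * (bool * bool * bool * bool))%type.

Definition lawD a := Pr P [set t | D t = a].
Definition lawM b := Pr P [set t | MM t = b].
Definition lawY c := Pr P [set t | YY t = c].
Definition lawY01 y01 y11 := lawY (false, y01, false, y11).

Lemma measurable_fiber_D a : measurable [set t | D t = a].
Proof. exact: measurable_bool_fiber. Qed.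

Lemma measurable_fiber_MM b : measurable [set t | MM t = b].
Proof. by apply: measurable_pair_fiber; exact: measurable_bool_fiber. Qed.

Lemma measurable_fiber_YY c : measurable [set t | YY t = c].
Proof.
by repeat apply: measurable_pair_fiber; exact: measurable_bool_fiber.
Qed.

Lemma measurable_fiber_V u : measurable [set t | V t = u].
Proof.
apply: measurable_pair_fiber; last exact: measurable_fiber_YY.
by apply: measurable_pair_fiber; [exact: measurable_fiber_D | exact: measurable_fiber_MM].
Qed.

Lemma law_factor a b c :
  Pr P [set t | V t = (a, b, c)] = lawD a * lawM b * lawY c.
Proof.
rewrite -(independence [set a] [set b] [set c]); congr (Pr P _).
by apply/seteqP; split => t; rewrite /V /MM /YY /=;
  [case=> -> -> -> | case=> [[-> ->] ->]].
Qed.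

(* Mandatory reporting: outcomes with Y(0,0) = 1 or Y(1,0) = 1 have
   probability zero. *)
Lemma lawY_null c : c.1.1.1 || c.1.2 -> lawY c = 0.
Proof.
move=> c0.
have mN : measurable [set t | Y00 t || Y10 t].
  rewrite (_ : [set t | _] = [set t | Y00 t] `|` [set t | Y10 t]).
    exact: measurableU.
  by apply/seteqP; split => t /= /orP.
have sub : [set t | YY t = c] `<=` [set t | Y00 t || Y10 t].
  by move=> t /= YYc; rewrite -YYc in c0.
apply/eqP; rewrite eq_le fine_ge0 ?measure_ge0 // andbT -mandatory_reporting.
apply: fine_le; rewrite ?fin_num_measure //; first exact: measurable_fiber_YY.
by apply: le_measure; rewrite ?inE //; exact: measurable_fiber_YY.
Qed.

Lemma sum_lawY (G : bool * bool * bool * bool -> R) :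
  \sum_c G c * lawY c
  = \sum_(y01 : bool) \sum_(y11 : bool) G (false, y01, false, y11) * lawY01 y01 y11.
Proof.
rewrite sum_pair sum_pair sum_pair !big_bool /=.
rewrite !(@lawY_null (true, _, _, _)) // !(@lawY_null (_, _, true, _)) ?orbT //.
by rewrite /lawY01 !mulr0 !addr0 !add0r.
Qed.

(* Normalisations, used to eliminate one parameter of each law. *)
Lemma lawD_false : lawD false = 1 - lawD true.
Proof.
have := law_sum1 P measurable_fiber_D; rewrite big_bool /= /lawD => <-.
ring.
Qed.

Lemma lawM_ff :
  lawM (false, false) = 1 - lawM (true, true) - lawM (true, false) - lawM (false, true).
Proof.
have := law_sum1 P measurable_fiber_MM; rewrite sum_pair !big_bool /= /lawM => <-.
ring.
Qed.

Lemma lawY01_ff :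
  lawY01 false false = 1 - lawY01 true true - lawY01 true false - lawY01 false true.
Proof.
have := law_sum1 P measurable_fiber_YY.
rewrite -(eq_bigr _ (fun c _ => mul1r (lawY c))) sum_lawY !big_bool /= => <-.
ring.
Qed.

Lemma model_sum (F : joint -> R) :
  \sum_u F u * Pr P [set t | V t = u]
  = \sum_(a : bool) \sum_(b1 : bool) \sum_(b2 : bool)
      \sum_(y01 : bool) \sum_(y11 : bool)
      F (a, (b1, b2), (false, y01, false, y11))
      * (lawD a * lawM (b1, b2) * lawY01 y01 y11).
Proof.
rewrite sum_pair sum_pair; apply: eq_bigr => a _; rewrite sum_pair.
apply: eq_bigr => b1 _; apply: eq_bigr => b2 _.
under eq_bigr do rewrite law_factor mulrA.
rewrite sum_lawY; apply: eq_bigr => y01 _; apply: eq_bigr => y11 _.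
by rewrite !mulrA.
Qed.

Lemma model_integral (a : pred joint) (g : joint -> R) :
  fine (\int[P]_(x in [set t | a (V t)]) (g (V x))%:E)%E
  = \sum_(a0 : bool) \sum_(b1 : bool) \sum_(b2 : bool)
      \sum_(y01 : bool) \sum_(y11 : bool)
      let u := (a0, (b1, b2), (false, y01, false, y11)) in
      g u * (a u)%:R * (lawD a0 * lawM (b1, b2) * lawY01 y01 y11).
Proof. by rewrite (event_integral P measurable_fiber_V) model_sum. Qed.

Lemma model_expectation (g : joint -> R) :
  fine (\int[P]_x (g (V x))%:E)%E
  = \sum_(a0 : bool) \sum_(b1 : bool) \sum_(b2 : bool)
      \sum_(y01 : bool) \sum_(y11 : bool)
      g (a0, (b1, b2), (false, y01, false, y11))
      * (lawD a0 * lawM (b1, b2) * lawY01 y01 y11).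
Proof. by rewrite (expectation_finite_rv P measurable_fiber_V) model_sum. Qed.

Lemma model_Pr (a : pred joint) :
  Pr P [set t | a (V t)]
  = \sum_(a0 : bool) \sum_(b1 : bool) \sum_(b2 : bool)
      \sum_(y01 : bool) \sum_(y11 : bool)
      (a (a0, (b1, b2), (false, y01, false, y11)))%:R
      * (lawD a0 * lawM (b1, b2) * lawY01 y01 y11).
Proof. by rewrite (Pr_event P measurable_fiber_V) model_sum. Qed.

(* Once a quantity is written as a sum over the law, expand the 32 terms,
   eliminate the normalised parameters and compare polynomials. *)
Ltac law_ring := rewrite !big_bool /= ?lawD_false ?lawM_ff ?lawY01_ff; ring.

Definition M t := if D t then M1 t else M0 t.
Definition Y1 t := if M1 t then Y11 t else Y10 t.
Definition Y0 t := if M0 t then Y01 t else Y00 t.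
Definition tau t : R := ind Y1 t - ind Y0 t.
Definition betaM := Ex P (fun t => ind M1 t - ind M0 t).
Definition betaY := Ex P (fun t => ind Y11 t - ind Y01 t).
Definition EY01 := Ex P (ind Y01).
Definition Sal := [set t | M0 t && M1 t].
Definition Smi := [set t | ~~ M0 t && M1 t].
Definition Sma := [set t | M0 t && ~~ M1 t].
Definition Sne := [set t | ~~ M0 t && ~~ M1 t].
Definition pD1 := Pr P [set t | D t].
Definition pD0 := Pr P [set t | ~~ D t].

(* The individual effect Y(1) - Y(0) as a function of the joint value,
   so that tau t = effect (V t). *)
Definition effect (u : joint) : R :=
  (if u.1.2.2 then u.2.2 else u.2.1.2)%:R
  - (if u.1.2.1 then u.2.1.1.2 else u.2.1.1.1)%:R.

Lemma Pr_Sal : Pr P Sal = lawM (true, true).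
Proof. rewrite (model_Pr (fun u => u.1.2.1 && u.1.2.2)); law_ring. Qed.

Lemma Pr_Smi : Pr P Smi = lawM (false, true).
Proof. rewrite (model_Pr (fun u => ~~ u.1.2.1 && u.1.2.2)); law_ring. Qed.

Lemma Pr_Sma : Pr P Sma = lawM (true, false).
Proof. rewrite (model_Pr (fun u => u.1.2.1 && ~~ u.1.2.2)); law_ring. Qed.

Lemma Pr_Sne : Pr P Sne = lawM (false, false).
Proof. rewrite (model_Pr (fun u => ~~ u.1.2.1 && ~~ u.1.2.2)); law_ring. Qed.

Lemma pD1_law : pD1 = lawD true.
Proof. rewrite /pD1 (model_Pr (fun u => u.1.1)); law_ring. Qed.

Lemma pD0_law : pD0 = 1 - lawD true.
Proof. rewrite /pD0 (model_Pr (fun u => ~~ u.1.1)); law_ring. Qed.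

Lemma betaM_law : betaM = lawM (false, true) - lawM (true, false).
Proof.
rewrite /betaM /Ex (model_expectation (fun u => u.1.2.2%:R - u.1.2.1%:R)).
law_ring.
Qed.

Lemma betaY_law : betaY = lawY01 false true - lawY01 true false.
Proof.
rewrite /betaY /Ex (model_expectation (fun u => u.2.2%:R - u.2.1.1.2%:R)).
law_ring.
Qed.

Lemma EY01_law : EY01 = lawY01 true true + lawY01 true false.
Proof. rewrite /EY01 /Ex (model_expectation (fun u => u.2.1.1.2%:R)); law_ring. Qed.

Lemma int_tau_Sal : fine (\int[P]_(t in Sal) (tau t)%:E)%E = Pr P Sal * betaY.
Proof.
rewrite (model_integral (fun u => u.1.2.1 && u.1.2.2) effect).
rewrite Pr_Sal betaY_law /effect; law_ring.
Qed.

Lemma int_tau_Smi :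
  fine (\int[P]_(t in Smi) (tau t)%:E)%E = Pr P Smi * (betaY + EY01).
Proof.
rewrite (model_integral (fun u => ~~ u.1.2.1 && u.1.2.2) effect).
rewrite Pr_Smi betaY_law EY01_law /effect; law_ring.
Qed.

Lemma int_tau_Sma : fine (\int[P]_(t in Sma) (tau t)%:E)%E = Pr P Sma * - EY01.
Proof.
rewrite (model_integral (fun u => u.1.2.1 && ~~ u.1.2.2) effect).
rewrite Pr_Sma EY01_law /effect; law_ring.
Qed.

Lemma int_tau_Sne : fine (\int[P]_(t in Sne) (tau t)%:E)%E = Pr P Sne * 0.
Proof.
rewrite (model_integral (fun u => ~~ u.1.2.1 && ~~ u.1.2.2) effect).
rewrite /effect; law_ring.
Qed.

(* Without monotonicity, P(S = mi) - P(S = ma) = E[M(1) - M(0)]. *)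
Lemma Pr_Smi_Sma : Pr P Smi = Pr P Sma + betaM.
Proof. rewrite Pr_Smi Pr_Sma betaM_law; ring. Qed.

Lemma strata_total : Pr P Sal + Pr P Smi + Pr P Sma + Pr P Sne = 1.
Proof. rewrite Pr_Sal Pr_Smi Pr_Sma Pr_Sne lawM_ff; ring. Qed.

Lemma int_tau_M :
  fine (\int[P]_(t in [set t | M t]) (tau t)%:E)%E
  = Pr P Sal * betaY + (Pr P Sma + betaM) * pD1 * (betaY + EY01)
    + Pr P Sma * pD0 * - EY01 + 0 * 0.
Proof.
rewrite (model_integral (fun u => if u.1.1 then u.1.2.2 else u.1.2.1) effect).
rewrite Pr_Sal Pr_Sma betaM_law pD1_law pD0_law betaY_law EY01_law /effect.
law_ring.
Qed.

Lemma Pr_M :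
  Pr P [set t | M t] = Pr P Sal + (Pr P Sma + betaM) * pD1 + Pr P Sma * pD0 + 0.
Proof.
rewrite (model_Pr (fun u => if u.1.1 then u.1.2.2 else u.1.2.1)).
rewrite Pr_Sal Pr_Sma betaM_law pD1_law pD0_law; law_ring.
Qed.

Lemma int_tau_DM :
  fine (\int[P]_(t in [set t | D t && M t]) (tau t)%:E)%E
  = pD1 * (Pr P Sal * betaY + (Pr P Sma + betaM) * (betaY + EY01)
           + 0 * - EY01 + 0 * 0).
Proof.
rewrite (model_integral
  (fun u => u.1.1 && if u.1.1 then u.1.2.2 else u.1.2.1) effect).
rewrite Pr_Sal Pr_Sma betaM_law pD1_law betaY_law EY01_law /effect; law_ring.
Qed.

Lemma Pr_DM :
  Pr P [set t | D t && M t] = pD1 * (Pr P Sal + (Pr P Sma + betaM) + 0 + 0).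
Proof.
rewrite (model_Pr (fun u => u.1.1 && if u.1.1 then u.1.2.2 else u.1.2.1)).
rewrite Pr_Sal Pr_Sma betaM_law pD1_law; law_ring.
Qed.

Lemma Ex_tau :
  Ex P tau = Pr P Sal * betaY + Pr P Smi * (betaY + EY01) + Pr P Sma * - EY01
             + Pr P Sne * 0.
Proof.
rewrite /Ex (model_expectation effect).
rewrite Pr_Sal Pr_Smi Pr_Sma Pr_Sne betaY_law EY01_law /effect; law_ring.
Qed.

Lemma int_tau_D :
  fine (\int[P]_(t in [set t | D t]) (tau t)%:E)%E
  = pD1 * (Pr P Sal * betaY + Pr P Smi * (betaY + EY01) + Pr P Sma * - EY01
           + Pr P Sne * 0).
Proof.
rewrite (model_integral (fun u => u.1.1) effect).
rewrite Pr_Sal Pr_Smi Pr_Sma Pr_Sne pD1_law betaY_law EY01_law /effect.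
law_ring.
Qed.

Lemma theta_al : 0 < Pr P Sal -> CondEx P tau Sal = betaY.
Proof. exact: CondEx_of_integral int_tau_Sal. Qed.

Lemma theta_mi : 0 < Pr P Smi -> CondEx P tau Smi = betaY + EY01.
Proof. exact: CondEx_of_integral int_tau_Smi. Qed.

Lemma theta_ma : 0 < Pr P Sma -> CondEx P tau Sma = - EY01.
Proof. exact: CondEx_of_integral int_tau_Sma. Qed.

Lemma theta_ne : 0 < Pr P Sne -> CondEx P tau Sne = 0.
Proof. exact: CondEx_of_integral int_tau_Sne. Qed.

(* Holds even when P(M = 1) = 0, both sides then being 0 / 0. *)
Lemma ATE_M1 : CondEx P tau [set t | M t]
  = wratio (Pr P Sal) ((Pr P Sma + betaM) * pD1) (Pr P Sma * pD0) 0
           betaY (betaY + EY01) (- EY01) 0.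
Proof.
apply: (CondEx_ratio (k := 1)) (oner_neq0 _); rewrite mul1r.
  exact: int_tau_M.
exact: Pr_M.
Qed.

Lemma ATT_M1 : 0 < Pr P [set t | D t && M t] ->
  CondEx P tau [set t | D t && M t]
  = wratio (Pr P Sal) (Pr P Sma + betaM) 0 0 betaY (betaY + EY01) (- EY01) 0.
Proof.
move=> pos; apply: CondEx_ratio int_tau_DM Pr_DM _.
by apply: contraTneq pos => pD1_0; rewrite Pr_DM pD1_0 mul0r ltxx.
Qed.

Lemma ATE : Ex P tau = wratio (Pr P Sal) (Pr P Smi) (Pr P Sma) (Pr P Sne)
                         betaY (betaY + EY01) (- EY01) 0.
Proof. by rewrite Ex_tau /wratio strata_total divr1. Qed.

Lemma ATT : 0 < pD1 -> CondEx P tau [set t | D t]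
  = wratio (Pr P Sal) (Pr P Smi) (Pr P Sma) (Pr P Sne)
           betaY (betaY + EY01) (- EY01) 0.
Proof.
move=> pos; apply: CondEx_ratio int_tau_D _ (lt0r_neq0 pos).
by rewrite strata_total mulr1.
Qed.

End MediationModel.

Theorem propositionA1 (d : measure_display) (T : measurableType d)
  (R : realType) (P : probability T R)
  (D M0 M1 Y00 Y01 Y10 Y11 : T -> bool) :
  rv_bool D -> rv_bool M0 -> rv_bool M1 ->
  rv_bool Y00 -> rv_bool Y01 -> rv_bool Y10 -> rv_bool Y11 ->
  indep3 P D (fun t => (M0 t, M1 t)) (fun t => (Y00 t, Y01 t, Y10 t, Y11 t)) ->
  (* mandatory reporting: Y(0,0) = Y(1,0) = 0 almost surely *)
  Pr P [set t | Y00 t || Y10 t] = 0 ->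
  let M := fun t => if D t then M1 t else M0 t in
  let Y1 := fun t => if M1 t then Y11 t else Y10 t in  (* Y(1) = Y(1,M(1)) *)
  let Y0 := fun t => if M0 t then Y01 t else Y00 t in  (* Y(0) = Y(0,M(0)) *)
  let tau := fun t => ind Y1 t - ind Y0 t in           (* Y(1) - Y(0) *)
  let betaM := Ex P (fun t => ind M1 t - ind M0 t) in
  let betaY := Ex P (fun t => ind Y11 t - ind Y01 t) in
  let EY01 := Ex P (ind Y01) in
  let Sal := [set t | M0 t && M1 t] in
  let Smi := [set t | ~~ M0 t && M1 t] in
  let Sma := [set t | M0 t && ~~ M1 t] in
  let Sne := [set t | ~~ M0 t && ~~ M1 t] in
  let pD1 := Pr P [set t | D t] in
  let pD0 := Pr P [set t | ~~ D t] in
  let th1 := betaY in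
  let th2 := betaY + EY01 in
  let th3 := - EY01 in
  let th4 := 0 in
  (* theta: principal-stratum effects, where defined *)
  (0 < Pr P Sal -> CondEx P tau Sal = th1) /\
  (0 < Pr P Smi -> CondEx P tau Smi = th2) /\
  (0 < Pr P Sma -> CondEx P tau Sma = th3) /\
  (0 < Pr P Sne -> CondEx P tau Sne = th4) /\
  (* P(S = mi) = P(S = ma) + beta_M *)
  Pr P Smi = Pr P Sma + betaM /\
  (* ATE_{M=1} *)
  (0 < Pr P [set t | M t] ->
     CondEx P tau [set t | M t]
     = wratio (Pr P Sal) ((Pr P Sma + betaM) * pD1) (Pr P Sma * pD0) 0
              th1 th2 th3 th4) /\
  (* ATT_{M=1} *)
  (0 < Pr P [set t | D t && M t] ->
     CondEx P tau [set t | D t && M t]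
     = wratio (Pr P Sal) (Pr P Sma + betaM) 0 0 th1 th2 th3 th4) /\
  (* ATE *)
  Ex P tau = wratio (Pr P Sal) (Pr P Smi) (Pr P Sma) (Pr P Sne) th1 th2 th3 th4 /\
  (* ATT *)
  (0 < pD1 ->
     CondEx P tau [set t | D t]
     = wratio (Pr P Sal) (Pr P Smi) (Pr P Sma) (Pr P Sne) th1 th2 th3 th4).
Proof.
move=> mD mM0 mM1 mY00 mY01 mY10 mY11 indep null /=.
split; first exact: (theta_al mD mM0 mM1 mY00 mY01 mY10 mY11 indep null).
split; first exact: (theta_mi mD mM0 mM1 mY00 mY01 mY10 mY11 indep null).
split; first exact: (theta_ma mD mM0 mM1 mY00 mY01 mY10 mY11 indep null).
split; first exact: (theta_ne mD mM0 mM1 mY00 mY01 mY10 mY11 indep null).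
split; first exact: (Pr_Smi_Sma mD mM0 mM1 mY00 mY01 mY10 mY11 indep null).
split; first by move=> _; exact: (ATE_M1 mD mM0 mM1 mY00 mY01 mY10 mY11 indep null).
split; first exact: (ATT_M1 mD mM0 mM1 mY00 mY01 mY10 mY11 indep null).
split; first exact: (ATE mD mM0 mM1 mY00 mY01 mY10 mY11 indep null).
exact: (ATT mD mM0 mM1 mY00 mY01 mY10 mY11 indep null).
Qed.
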